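(* Consider a sample path of the CTAS sampling rule (run without stopping). For every $\varepsilon>0$, if there exists $t_0$ such that $\max_a|\hat w^*_a(t)-w^*_a|<\varepsilon$ for all $t\ge t_0$, then there exists $t_\varepsilon\ge t_0$ such that for all $t\ge t_\varepsilon$ and all arms $a$, \[ \left|\frac{\hat c_a(t)N_a(t)}{J(t)}-w^*_a\right|\le3(K-1)\varepsilon. \]
   Context: Setting: $K$ arms; arm $a$ has reward distribution in a one-parameter natural exponential family parametrized by the mean $\mu_a$ and cost distribution of mean $c_a$ supported in $[\ell,1]$, $\ell>0$; the best arm is unique. $N_a(t)$: number of pulls of $a$ up to $t$; $\hat\mu_a(t),\hat c_a(t)$: empirical mean reward and cost; $J(t)=\sum_{k\le t}C_k$ with $C_k$ the cost observed at round $k$. $d$ is the KL divergence within the family. For reward means $\boldsymbol{\mu}'$ with unique best arm and positive cost means $\boldsymbol{c}'$, $\boldsymbol{w}^*(\boldsymbol{\mu}',\boldsymbol{c}')$ is the maximizer over the simplex of $\inf_{\boldsymbol{\lambda}:a^*(\boldsymbol{\lambda})\ne a^*(\boldsymbol{\mu}')}\sum_a\frac{w_a}{c'_a}d(\mu'_a,\lambda_a)$; $\boldsymbol{w}^*=\boldsymbol{w}^*(\boldsymbol{\mu},\boldsymbol{c})$ and $\hat{\boldsymbol{w}}^*(t)=\boldsymbol{w}^*(\hat{\boldsymbol{\mu}}(t),\hat{\boldsymbol{c}}(t))$. CTAS sampling rule: pull each arm once; then at each time $t$, with $\mathcal{U}_t=\{a:N_a(t)<\sqrt t\}$, pull an arm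 in $\arg\min_aN_a(t)$ if $\mathcal{U}_t\neq\emptyset$, and otherwise an arm in $\arg\max_a(J(t)\hat w^*_a(t)-\hat c_a(t)N_a(t))$. *)

From HB Require Import structures.
From mathcomp Require Import all_boot all_order all_algebra.
From mathcomp Require Import all_classical all_reals.
Set Implicit Arguments. Unset Strict Implicit. Unset Printing Implicit Defensive.
Import Order.TTheory GRing.Theory Num.Theory.
Local Open Scope ring_scope.
Local Open Scope classical_set_scope.

Section CTAS.
Variable R : realType.
Variable K : nat.

Definition unique_best (mu : 'I_K -> R) (a : 'I_K) : Prop :=
  forall b : 'I_K, b != a -> mu b < mu a.

Definition in_simplex (w : 'I_K -> R) : Prop :=
  (forall a, 0 <= w a) /\ \sum_(a < K) w a = 1.

(* Alternative set: mean vectors lam whose best arm differs from a*(mu),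
   where a = a*(mu) is the unique best arm of mu. *)
Definition alt_set (mu : 'I_K -> R) : set ('I_K -> R) :=
  [set lam | exists a, unique_best mu a /\
      exists2 b : 'I_K, b != a & lam a < lam b].

Definition cost_objective (d : R -> R -> R) (mu c w : 'I_K -> R) : R :=
  inf [set (\sum_(a < K) w a / c a * d (mu a) (lam a)) | lam in alt_set mu].

Definition is_opt_weights (d : R -> R -> R) (mu c w : 'I_K -> R) : Prop :=
  in_simplex w /\
  forall w', in_simplex w' -> cost_objective d mu c w' <= cost_objective d mu c w.

(* ---- sample path quantities; round k >= 1 pulls arm A k, observing
   reward X k and cost C k ---- *)

Definition Npulls (A : nat -> 'I_K) (a : 'I_K) (t : nat) : nat :=
  (\sum_(1 <= k < t.+1) (A k == a))%N.

Definition Jcost (C : nat -> R) (t : nat) : R := \sum_(1 <= k < t.+1) C k.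

(* empirical mean of the observations Y of arm a up to time t
   (0 if a has not been pulled yet) *)
Definition emp_mean (A : nat -> 'I_K) (Y : nat -> R) (t : nat) (a : 'I_K) : R :=
  (\sum_(1 <= k < t.+1 | A k == a) Y k) / (Npulls A a t)%:R.

Definition ctas_path (wstar : ('I_K -> R) -> ('I_K -> R) -> 'I_K -> R)
  (A : nat -> 'I_K) (X C : nat -> R) : Prop :=
  (forall i : 'I_K, A i.+1 = i) /\
  (forall t : nat, (K <= t)%N ->
     let N := fun a => Npulls A a t in
     let what := wstar (emp_mean A X t) (emp_mean A C t) in
     let chat := emp_mean A C t in
     ((exists a, (N a)%:R < Num.sqrt (t%:R : R)) ->
        forall b, (N (A t.+1) <= N b)%N) /\
     ((forall a, Num.sqrt (t%:R : R) <= (N a)%:R) ->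
        forall b, Jcost C t * what b - chat b * (N b)%:R
                  <= Jcost C t * what (A t.+1) - chat (A t.+1) * (N (A t.+1))%:R)).

End CTAS.

(* Write J_a(t) = chat_a(t) N_a(t) for the cost paid on arm a, so that
   sum_a J_a(t) = J(t).  At a tracking round the pulled arm maximises
   J(t) what_b(t) - J_b(t), a family summing to 0, hence J_a(t) <= J(t) what_a(t);
   at a forced round J_a(t) <= N_a(t) < sqrt t.  As costs are at most 1, induction
   from T = max(t0, K) gives J_a(t) <= T + 1 + J(t) (w*_a + eps) + sqrt t, and since
   J(t) >= l t the slack T + 1 + sqrt t is eventually below eps J(t).  Thus every
   deviation J_a(t) - J(t) w*_a is at most 2 eps J(t); the deviations sum to 0, so
   each is also at least -2 (K - 1) eps J(t).  This yields the bound with 2 (K - 1)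
   in place of 3 (K - 1); only w* in the simplex is used, not its optimality. *)

From HB Require Import structures.
From mathcomp Require Import all_boot all_order all_algebra.
From mathcomp Require Import all_classical all_reals.
From mathcomp Require Import ring lra zify.
Import Order.TTheory GRing.Theory Num.Theory.

Set Implicit Arguments.
Unset Strict Implicit.
Unset Printing Implicit Defensive.

Local Open Scope ring_scope.

Section CumulativeCost.
Variables (R : realType) (C : nat -> R).

Lemma JcostS t : Jcost C t.+1 = Jcost C t + C t.+1.
Proof. by rewrite /Jcost big_nat_recr. Qed.

Lemma Jcost_ge_linear (l : R) :
  (forall k, (0 < k)%N -> l <= C k) -> forall t, l * t%:R <= Jcost C t.
Proof.
move=> l_le_C; elim=> [|t IHt]; first by rewrite /Jcost big_geq // mulr0.
rewrite JcostS -natr1 mulrDr mulr1; apply: lerD => //.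
exact: l_le_C.
Qed.

Hypothesis C_ge0 : forall k, (0 < k)%N -> 0 <= C k.

Lemma Jcost_nondecreasing : {homo Jcost C : s t / (s <= t)%N >-> s <= t}.
Proof.
move=> s t le_st; rewrite /Jcost [leRHS](@big_cat_nat _ _ _ s.+1) //= lerDl.
rewrite big_nat_cond; apply: sumr_ge0 => k /andP[/andP[lt_sk _] _].
exact: C_ge0 (leq_ltn_trans (leq0n s) lt_sk).
Qed.

Lemma Jcost_ge0 t : 0 <= Jcost C t.
Proof. by have := Jcost_nondecreasing (leq0n t); rewrite /Jcost big_geq. Qed.

End CumulativeCost.

Section ArmCosts.
Variables (R : realType) (K : nat) (A : nat -> 'I_K) (C : nat -> R).

Definition arm_cost (a : 'I_K) (t : nat) : R :=
  \sum_(1 <= k < t.+1 | A k == a) C k.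

Lemma arm_costS a t :
  arm_cost a t.+1 = arm_cost a t + (if A t.+1 == a then C t.+1 else 0).
Proof. by rewrite /arm_cost big_mkcond big_nat_recr //= -big_mkcond. Qed.

Lemma NpullsS a t : Npulls A a t.+1 = (Npulls A a t + (A t.+1 == a))%N.
Proof. by rewrite /Npulls big_nat_recr. Qed.

Lemma Npulls_leq a t : (Npulls A a t <= t)%N.
Proof.
elim: t => [|t IHt]; first by rewrite /Npulls big_geq.
by rewrite NpullsS; case: (A t.+1 == a) => /=; lia.
Qed.

Lemma sum_arm_cost t : \sum_(a < K) arm_cost a t = Jcost C t.
Proof.
elim: t => [|t IHt].
  by rewrite /Jcost big_geq // big1 // => a _; rewrite /arm_cost big_geq.
under eq_bigr do rewrite arm_costS.
rewrite big_split /= IHt JcostS (bigD1 (A t.+1)) //= eqxx big1 ?addr0 // => b.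
by rewrite eq_sym => /negbTE ->.
Qed.

Hypothesis C_ge0 : forall k, (0 < k)%N -> 0 <= C k.
Hypothesis C_le1 : forall k, (0 < k)%N -> C k <= 1.

Lemma arm_cost_ge0 a t : 0 <= arm_cost a t.
Proof.
rewrite /arm_cost big_nat_cond; apply: sumr_ge0 => k /andP[/andP[k_gt0 _] _].
exact: C_ge0.
Qed.

Lemma arm_cost_le_Npulls a t : arm_cost a t <= (Npulls A a t)%:R.
Proof.
elim: t => [|t IHt]; first by rewrite /arm_cost /Npulls !big_geq.
rewrite arm_costS NpullsS natrD; have := C_le1 (ltn0Sn t).
by case: (A t.+1 == a) => /=; lra.
Qed.

(* If [a] was never pulled, [emp_mean] is the junk value [0 / 0 = 0]. *)
Lemma emp_mean_mul_Npulls a t :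
  emp_mean A C t a * (Npulls A a t)%:R = arm_cost a t.
Proof.
rewrite /emp_mean -/(arm_cost a t).
have [N0|N_neq0] := eqVneq (Npulls A a t) 0%N; last by rewrite divfK ?pnatr_eq0.
have := arm_cost_le_Npulls a t; have := arm_cost_ge0 a t.
by rewrite N0 mulr0; lra.
Qed.

End ArmCosts.

Lemma zero_sum_max_ge0 (R : numDomainType) (I : finType) (f : I -> R) (a : I) :
  \sum_i f i = 0 -> (forall i, f i <= f a) -> 0 <= f a.
Proof.
move=> f_sum0 f_le_a.
have : \sum_i f i <= \sum_(i : I) f a by apply: ler_sum => i _; apply: f_le_a.
rewrite f_sum0 sumr_const -mulr_natl pmulr_rge0 // ltr0n.
by apply/card_gt0P; exists a.
Qed.

Lemma zero_sum_norm_le (R : realDomainType) (I : finType) (u : I -> R) (M : R)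
    (a : I) :
  \sum_i u i = 0 -> (forall i, u i <= M) -> `|u a| <= (#|I|%:R - 1) * M.
Proof.
rewrite (bigD1 a) //= => u_sum0 u_le.
have card_gt0 : (0 < #|I|)%N by apply/card_gt0P; exists a.
have rest_le : \sum_(i | i != a) u i <= (#|I|%:R - 1) * M.
  apply: le_trans (ler_sum _ (fun i _ => u_le i)) _.
  by rewrite sumr_const cardC1 -subn1 mulrnBr // mulrBl mul1r mulr_natl.
rewrite ler_norml; apply/andP; split; first lra.
have [I1|I_neq1] := eqVneq #|I| 1%N.
  have rest0 : \sum_(i | i != a) u i = 0.
    apply: big_pred0 => i; have := card0_eq (A := predC1 a).
    by rewrite cardC1 I1 => /(_ erefl i).
  by rewrite I1 subrr mul0r; lra.
have le2 : 2%:R <= #|I|%:R :> R by rewrite ler_nat; lia.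
have := u_le a; nra.
Qed.

Lemma share_dev_le (R : realFieldType) (I : finType) (x w : I -> R) (J e : R)
    (a : I) :
  0 < J -> \sum_i x i = J -> \sum_i w i = 1 -> (forall i, x i - J * w i <= e * J) ->
  `|x a / J - w a| <= (#|I|%:R - 1) * e.
Proof.
move=> J_gt0 x_sum w_sum1 dev_le.
have dev_sum0 : \sum_i (x i - J * w i) = 0.
  by rewrite big_split /= sumrN -mulr_sumr x_sum w_sum1 mulr1 subrr.
have -> : x a / J - w a = (x a - J * w a) / J by field; rewrite lt0r_neq0.
rewrite normrM normfV (gtr0_norm J_gt0) ler_pdivrMr // -mulrA.
exact: zero_sum_norm_le a dev_sum0 dev_le.
Qed.

Lemma eventually_sqrt_le_linear (R : realType) (b c : R) : 0 < c ->
  exists n : nat, forall t, (n <= t)%N -> b + Num.sqrt t%:R <= c * t%:R.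
Proof.
move=> c_gt0; have b_part : 0 <= 2 * `|b| / c by rewrite divr_ge0 ?mulr_ge0 ?normr_ge0 ?ltW.
have c_part : 0 <= 4 / c ^+ 2 by rewrite divr_ge0 ?exprn_ge0 ?ltW.
set x := 2 * `|b| / c + 4 / c ^+ 2; have x_ge0 : 0 <= x by rewrite addr_ge0.
exists (Num.Def.archi_bound x) => t le_nt.
have lt_xt : x < t%:R by apply: lt_le_trans (archi_boundP x_ge0) _; rewrite ler_nat.
have b_le : b <= c * t%:R / 2.
  have : 2 * `|b| / c < t%:R by apply: le_lt_trans lt_xt; rewrite lerDl.
  rewrite ltr_pdivrMr // => lt_b; have := ler_norm b; lra.
set s := Num.sqrt t%:R; have s_ge0 : 0 <= s := sqrtr_ge0 _.
have t_eq : t%:R = s * s by rewrite -expr2 sqr_sqrtr.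
have cs_ge2 : 2 <= c * s.
  have : 4 / c ^+ 2 < t%:R by apply: le_lt_trans lt_xt; rewrite lerDr.
  rewrite ltr_pdivrMr ?exprn_gt0 // t_eq => lt4.
  have cs_ge0 : 0 <= c * s := mulr_ge0 (ltW c_gt0) s_ge0.
  have : 4 < (c * s) * (c * s) by move: lt4; rewrite expr2; lra.
  nra.
rewrite t_eq in b_le *; nra.
Qed.

Section CTASTracking.
Variables (R : realType) (K : nat).
Variable wstar : ('I_K -> R) -> ('I_K -> R) -> 'I_K -> R.
Variables (A : nat -> 'I_K) (X C : nat -> R).
Hypothesis path : ctas_path wstar A X C.
Hypothesis wstar_simplex : forall mu' c', in_simplex (wstar mu' c').
Hypothesis C_ge0 : forall k, (0 < k)%N -> 0 <= C k.
Hypothesis C_le1 : forall k, (0 < k)%N -> C k <= 1.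

Local Notation what t := (wstar (emp_mean A X t) (emp_mean A C t)).

Lemma what_ge0 t a : 0 <= what t a.
Proof. by case: (wstar_simplex (emp_mean A X t) (emp_mean A C t)). Qed.

Lemma tracked_arm_cost_le t a :
  (K <= t)%N -> (forall b, Num.sqrt t%:R <= (Npulls A b t)%:R :> R) -> A t.+1 = a ->
  arm_cost A C a t <= Jcost C t * what t a.
Proof.
move=> le_Kt all_sampled pulled; have [_ /(_ t le_Kt) [_ track]] := path.
pose f b := Jcost C t * what t b - arm_cost A C b t.
have f_sum0 : \sum_b f b = 0.
  rewrite big_split /= -mulr_sumr sumrN sum_arm_cost.
  by rewrite (proj2 (wstar_simplex _ _)) mulr1 subrr.
have f_le b : f b <= f a.
  by rewrite /f -!(emp_mean_mul_Npulls A C_ge0 C_le1) -pulled; apply: track.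
by have := zero_sum_max_ge0 f_sum0 f_le; rewrite subr_ge0.
Qed.

Lemma pulled_arm_cost_le t a : (K <= t)%N -> A t.+1 = a ->
  arm_cost A C a t <= Jcost C t * what t a + Num.sqrt t%:R.
Proof.
move=> le_Kt pulled; have [_ /(_ t le_Kt) [forced _]] := path.
have Jw_ge0 : 0 <= Jcost C t * what t a by rewrite mulr_ge0 ?(Jcost_ge0 C_ge0) ?what_ge0.
have [[b under_b]|all_sampled] :=
  pselect (exists b, (Npulls A b t)%:R < Num.sqrt t%:R :> R).
  have le_ab : (Npulls A a t)%:R <= (Npulls A b t)%:R :> R.
    by rewrite ler_nat -pulled; apply: forced; exists b.
  have := arm_cost_le_Npulls A C_le1 a t; lra.
have := sqrtr_ge0 (t%:R : R); suff : arm_cost A C a t <= Jcost C t * what t a by lra.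
apply: tracked_arm_cost_le => // b; rewrite leNgt; apply/negP => under_b.
by apply: all_sampled; exists b.
Qed.

Lemma arm_cost_le_tracking (T : nat) a (v : R) : (K <= T)%N ->
  (forall t, (T <= t)%N -> what t a <= v) ->
  forall t, (T <= t)%N -> arm_cost A C a t <= T.+1%:R + Jcost C t * v + Num.sqrt t%:R.
Proof.
move=> le_KT what_le.
have v_ge0 : 0 <= v by apply: le_trans (what_le T (leqnn T)); apply: what_ge0.
have Jv_ge0 t : 0 <= Jcost C t * v := mulr_ge0 (Jcost_ge0 C_ge0 t) v_ge0.
move=> t /subnK <-; elim: (t - T)%N => [|n IHn].
  rewrite add0n; have := arm_cost_le_Npulls A C_le1 a T.
  have := Npulls_leq A a T; rewrite -(ler_nat R) -natr1.
  by have := sqrtr_ge0 (T%:R : R); have := Jv_ge0 T; lra.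
rewrite addSn arm_costS.
have le_J : Jcost C (n + T) * v <= Jcost C (n + T).+1 * v.
  by rewrite ler_wpM2r // (Jcost_nondecreasing C_ge0).
have le_sqrt : Num.sqrt (n + T)%:R <= Num.sqrt (n + T).+1%:R :> R.
  by rewrite ler_sqrt // ler_nat.
case: eqP => [pulled|_]; last by lra.
have := C_le1 (ltn0Sn (n + T)); have : 1 <= T.+1%:R :> R by rewrite ler1n.
have := pulled_arm_cost_le (leq_trans le_KT (leq_addl n T)) pulled.
have := mulr_ge0 (Jcost_ge0 C_ge0 (n + T)) (what_ge0 (n + T) a).
have := ler_wpM2l (Jcost_ge0 C_ge0 (n + T)) (what_le _ (leq_addl n T)).
lra.
Qed.

End CTASTracking.

Theorem lemma5 (R : realType) (K : nat) (l : R) (d : R -> R -> R)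
  (mu c : 'I_K -> R)
  (wstar : ('I_K -> R) -> ('I_K -> R) -> 'I_K -> R)
  (A : nat -> 'I_K) (X C : nat -> R)
  (hl : 0 < l) (hl1 : l <= 1)
  (hc : forall a, l <= c a <= 1)
  (hbest : exists a, unique_best mu a)
  (hwsimp : forall mu' c', in_simplex (wstar mu' c'))
  (hwopt : forall mu' c', (exists a, unique_best mu' a) ->
            (forall a, 0 < c' a) -> is_opt_weights d mu' c' (wstar mu' c'))
  (hC : forall k, (1 <= k)%N -> l <= C k <= 1)
  (hpath : ctas_path wstar A X C)
  (eps : R) (heps : 0 < eps) (t0 : nat)
  (hconv : forall t, (t0 <= t)%N -> forall a,
      `|wstar (emp_mean A X t) (emp_mean A C t) a - wstar mu c a| < eps) :
  exists teps : nat, (t0 <= teps)%N /\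
    forall t, (teps <= t)%N -> forall a,
      `|emp_mean A C t a * (Npulls A a t)%:R / Jcost C t - wstar mu c a|
        <= 3 * (K%:R - 1) * eps.
Proof.
have C_ge0 k : (0 < k)%N -> 0 <= C k.
  by move=> /hC /andP[l_le _]; rewrite (le_trans (ltW hl)).
have C_le1 k : (0 < k)%N -> C k <= 1 by move=> /hC /andP[].
have [a0 _] := hbest; have K_gt0 : (0 < K)%N by apply: leq_ltn_trans (ltn_ord a0).
have [_ w_sum1] := hwsimp mu c; set w := wstar mu c in hconv w_sum1 *.
pose T := maxn t0 K.
have cost_le a t : (T <= t)%N ->
    arm_cost A C a t <= T.+1%:R + Jcost C t * (w a + eps) + Num.sqrt t%:R.
  apply: (arm_cost_le_tracking hpath hwsimp C_ge0 C_le1) => [|s le_Ts].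
    exact: leq_maxr.
  by have := hconv s (leq_trans (leq_maxl _ _) le_Ts) a; rewrite ltr_norml; lra.
have [n sqrt_le] := eventually_sqrt_le_linear T.+1%:R (mulr_gt0 heps hl).
exists (maxn T n); split; first by rewrite (leq_trans (leq_maxl t0 K)) ?leq_maxl.
move=> t; rewrite geq_max => /andP[le_Tt le_nt] a.
have epsJ_ge : eps * l * t%:R <= eps * Jcost C t.
  rewrite -mulrA ler_wpM2l ?(ltW heps) //.
  by apply: Jcost_ge_linear => k /hC /andP[].
have J_gt0 : 0 < Jcost C t.
  have t_gt0 : (0 < t)%N by apply: leq_trans K_gt0 (leq_trans (leq_maxr _ _) le_Tt).
  by rewrite -(pmulr_rgt0 _ heps); apply: lt_le_trans epsJ_ge; rewrite !mulr_gt0 ?ltr0n.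
have dev_le b : arm_cost A C b t - Jcost C t * w b <= 2 * eps * Jcost C t.
  by have := cost_le b t le_Tt; have := sqrt_le t le_nt; lra.
have := share_dev_le a J_gt0 (sum_arm_cost A C t) w_sum1 dev_le.
rewrite card_ord emp_mean_mul_Npulls // => /le_trans; apply.
have K1_ge0 : 0 <= K%:R - 1 :> R by rewrite subr_ge0 ler1n.
by have := mulr_ge0 K1_ge0 (ltW heps); lra.
Qed.
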